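(* Let $n\geq 8$, let $\mathfrak{X}=\{A_0,A_1,A_2\}$ be a non-symmetric class $2$ association scheme of order $n-1$, and let $B_1$ be the $(2n-1)\times(2n-1)$ matrix defined from $A_1$ as in the context, so that $\{I_{2n-1},B_1,B_1^T\}$ is a non-symmetric class $2$ association scheme. For $i\in\{1,\dots,2n-1\}$ let $N(i)=\{j : (B_1)_{ij}=1\}$, and for $1\le i<j<k\le 2n-1$ let $\nu(i,j,k)=|N(i)\cap N(j)\cap N(k)|$. Then $\nu(i,j,k)\leq (n-2)/2$ for all $1\le i<j<k\le 2n-1$, with equality if and only if $(i,j,k)=(a,n,n+a)$ for some $1\leq a\leq n-1$.
   Context: An association scheme of order $N$ is a set $\{A_0,\dots,A_d\}$ of $N\times N$ $0/1$-matrices such that $A_0=I_N$, $\sum_i A_i=J_N$ (all-ones matrix), each $A_i^T$ is in the set, and each product $A_iA_j$ is a linear combination of the $A_k$. It is non-symmetric of class $2$ if $d=2$ and $A_1^T=A_2\neq A_1$. (For such a scheme of order $n-1$ one has $n\equiv 0 \pmod 4$.) Definition of $B_1$ (indices $1\le i,j\le n-1$): $(B_1)_{i,j}=(A_1)_{ij}$, $(B_1)_{i,n}=0$, $(B_1)_{i,n+j}=(A_0+A_1)_{ij}$; $(B_1)_{n,j}=1$, $(B_1)_{n,n}=0$, $(B_1)_{n,n+j}=0$; $(B_1)_{n+i,j}=(A_1)_{ij}$, $(B_1)_{n+i,n}=1$, $(B_1)_{n+i,n+j}=(A_2)_{ij}$. In block form, $B_1=\begin{bmatrix} A_1 & \mathbf{0}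 & A_0+A_1\\ \mathbf{1}^T & 0 & \mathbf{0}^T\\ A_1 & \mathbf{1} & A_2\end{bmatrix}$ with blocks indexed by $\{1,\dots,n-1\},\{n\},\{n+1,\dots,2n-1\}$. *)

From HB Require Import structures.
From mathcomp Require Import all_boot all_order all_algebra.
Set Implicit Arguments. Unset Strict Implicit. Unset Printing Implicit Defensive.
Import Order.TTheory GRing.Theory Num.Theory.
Local Open Scope ring_scope.

Definition nonsym_class2_scheme (m : nat) (A0 A1 A2 : 'M[int]_m) : Prop :=
     A0 = 1%:M
  /\ (forall i j, (A1 i j == 0) || (A1 i j == 1))
  /\ (forall i j, (A2 i j == 0) || (A2 i j == 1))
  /\ A0 + A1 + A2 = const_mx 1
  /\ A1^T = A2
  /\ A2 != A1
  /\ (forall X Y, X \in [:: A0; A1; A2] -> Y \in [:: A0; A1; A2] ->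
        exists c0 c1 c2 : int, X *m Y = c0 *: A0 + c1 *: A1 + c2 *: A2).

(* The matrix B_1 of order m + 1 + m (= 2n-1 with m = n-1), in block form
   [ A1  0  A0+A1 ; 1^T 0 0^T ; A1 1 A2 ], blocks indexed by
   {0..m-1}, {m}, {m+1..2m} (0-based). *)
Definition B1mx (m : nat) (A0 A1 A2 : 'M[int]_m) : 'M[int]_(m + 1 + m) :=
  block_mx (block_mx A1 (0 : 'M_(m, 1)) (const_mx 1 : 'M_(1, m)) (0 : 'M_(1, 1)))
           (col_mx (A0 + A1) (0 : 'M_(1, m)))
           (row_mx A1 (const_mx 1 : 'M_(m, 1)))
           A2.

Definition nbhd (N : nat) (B : 'M[int]_N) (i : 'I_N) : {set 'I_N} :=
  [set j | B i j == 1].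

Definition nu (N : nat) (B : 'M[int]_N) (i j k : 'I_N) : nat :=
  #|nbhd B i :&: nbhd B j :&: nbhd B k|.

From HB Require Import structures.
From mathcomp Require Import all_boot all_order all_algebra.
From mathcomp Require Import zify.
Import Order.TTheory GRing.Theory Num.Theory.
Set Implicit Arguments. Unset Strict Implicit. Unset Printing Implicit Defensive.

(* The relation x -> y iff (A1)_{xy} = 1 is a
   tournament, and closure of the scheme under products forces A1 A1^T and
   A1^T A1 to have constant diagonal and off-diagonal entries; double counting
   then shows that it is a doubly regular tournament: m = 4l+3, every vertex has
   out-degree 2l+1, and any two vertices have l common out- and l common
   in-neighbours.  Hence (n-2)/2 = 2l+1.

   Splitting the indices of B1 into the blocks {1..m}, {n}, {n+1..2m+1}, the
   common neighbourhood of i < j < k decomposes into three triple intersections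
   of (closed) out- and in-neighbourhoods of the tournament.  For each of the
   seven possible block patterns these are bounded by l, l+1 or 2l, except for
   the pattern (a, n, n+a) whose common neighbourhood is the out-neighbourhood
   of a, of size exactly 2l+1. *)

Lemma card_indicator (T : finType) (S : {set T}) : #|S| = \sum_w (w \in S : nat).
Proof. by rewrite -sum1_card big_mkcond; apply: eq_bigr => w _; case: (w \in S). Qed.

Lemma sum_const_off (T : finType) (F : T -> nat) x0 c :
  (forall y, y != x0 -> F y = c) -> \sum_y F y = F x0 + #|T|.-1 * c.
Proof.
move=> Fc; rewrite (bigD1 x0) //= (eq_bigr (fun _ => c)); last by move=> y /Fc.
by rewrite sum_nat_const cardC1.
Qed.

Lemma sum_card_meet (T : finType) (P : T -> {set T}) x :
  \sum_y #|P x :&: P y| = \sum_(w in P x) #|[set y | w \in P y]|.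
Proof.
under eq_bigr => y _ do rewrite card_indicator.
rewrite exchange_big [RHS]big_mkcond /=; apply: eq_bigr => w _.
case: (boolP (w \in P x)) => Pxw; last by rewrite big1 // => y _; rewrite !inE (negbTE Pxw).
by rewrite card_indicator; apply: eq_bigr => y _; rewrite !inE Pxw.
Qed.

Lemma meet2_sub (T : finType) (A B C : {set T}) :
  #|A :&: B| <= #|A :&: B :&: C| -> A :&: B \subset C.
Proof.
move=> le_card; have : A :&: B :&: C = A :&: B.
  by apply/eqP; rewrite eqEcard subsetIl le_card.
by move=> <-; apply: subsetIr.
Qed.

Section Tournament.
Variables (T : finType) (e : rel T).
Hypothesis e_irr : irreflexive e.
Hypothesis e_tour : forall x y, x != y -> e y x = ~~ e x y.

Definition outN x := [set y | e x y].
Definition inN x := [set y | e y x].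
Definition coutN x := x |: outN x.

Lemma arc_neq x y : e x y -> x != y.
Proof. by move=> exy; apply: contraTneq exy => ->; rewrite e_irr. Qed.

Lemma arc_asym x y : e x y -> e y x = false.
Proof. by move=> exy; rewrite e_tour ?arc_neq // exy. Qed.

Lemma arc_total x y : x != y -> e x y \/ e y x.
Proof. by move=> nxy; rewrite (e_tour nxy); case: (e x y); [left | right]. Qed.

Lemma card_out_in x : #|outN x| + #|inN x| = #|T|.-1.
Proof.
rewrite -cardsUI -(cardsC1 x).
have -> : outN x :&: inN x = set0.
  apply/setP => y; rewrite !inE; by apply/negbTE/andP => -[/arc_asym ->].
rewrite cards0 addn0; apply: eq_card => y; rewrite !inE.
by case: (eqVneq y x) => [->|nyx]; [rewrite e_irr | rewrite (e_tour nyx) orNb].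
Qed.

(* Each arc is counted once as an out-arc and once as an in-arc. *)
Lemma sum_out_in : \sum_x #|outN x| = \sum_x #|inN x|.
Proof.
under eq_bigr do rewrite card_indicator.
under [RHS]eq_bigr do rewrite card_indicator.
by rewrite exchange_big; apply: eq_bigr => y _; apply: eq_bigr => x _; rewrite !inE.
Qed.

Lemma doubly_regular_params k kI l lI :
  1 < #|T| ->
  (forall x, #|outN x| = k) -> (forall x, #|inN x| = kI) ->
  (forall x y, x != y -> #|outN x :&: outN y| = l) ->
  (forall x y, x != y -> #|inN x :&: inN y| = lI) ->
  [/\ kI = k, lI = l, k = l.*2.+1 & #|T| = k.*2.+1].
Proof.
move=> T_gt1 out_k in_k out_l in_l.
have /card_gt0P[x0 _] : 0 < #|T| by exact: ltnW.
have kI_k : kI = k.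
  have := sum_out_in; rewrite (eq_bigr _ (fun x _ => out_k x)).
  rewrite (eq_bigr _ (fun x _ => in_k x)) !sum_nat_const => /eqP.
  by rewrite eqn_pmul2l; [move/eqP | exact: ltnW T_gt1].
have card_T : #|T| = k.*2.+1 by have := card_out_in x0; rewrite out_k in_k; lia.
have count_out : k + k.*2 * l = k * k.
  have := sum_card_meet outN x0.
  rewrite (sum_const_off (x0 := x0) (c := l)) => [|y]; last by rewrite eq_sym => /out_l.
  rewrite setIid out_k card_T (eq_bigr (fun _ => kI)) => [|w _]; last first.
    by rewrite -(in_k w); apply: eq_card => y; rewrite !inE.
  by rewrite sum_nat_const out_k kI_k.
have count_in : k + k.*2 * lI = k * k.
  have := sum_card_meet inN x0.
  rewrite (sum_const_off (x0 := x0) (c := lI)) => [|y]; last by rewrite eq_sym => /in_l.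
  rewrite setIid in_k card_T (eq_bigr (fun _ => k)) => [|w _]; last first.
    by rewrite -(out_k w); apply: eq_card => y; rewrite !inE.
  by rewrite sum_nat_const in_k kI_k.
have k_gt0 : 0 < k by lia.
have k_eq : k = l.*2.+1.
  by apply/eqP; rewrite -(eqn_pmul2l k_gt0); apply/eqP; nia.
split => //; apply/eqP; rewrite -(eqn_pmul2l k_gt0); apply/eqP; nia.
Qed.

End Tournament.

Section DoublyRegular.
Variables (T : finType) (e : rel T) (l : nat).
Hypothesis e_irr : irreflexive e.
Hypothesis e_tour : forall x y, x != y -> e y x = ~~ e x y.
Hypothesis out_deg : forall x, #|outN e x| = l.*2.+1.
Hypothesis out_meet : forall x y, x != y -> #|outN e x :&: outN e y| = l.
Hypothesis in_meet : forall x y, x != y -> #|inN e x :&: inN e y| = l.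
Hypothesis l_gt0 : 0 < l.

Local Notation O := (outN e).
Local Notation I := (inN e).
Local Notation C := (coutN e).

Lemma meet3_le (A B D : {set T}) : #|A :&: B :&: D| <= #|A :&: B|.
Proof. exact/subset_leq_card/subsetIl. Qed.

(* Every arc a -> b lies on a directed path a -> w -> b: otherwise the 2l+1
   out-neighbours of a would all lie in {b} together with the l common
   out-neighbours of a and b. *)
Lemma arc_path2 a b : e a b -> exists2 w, e a w & e w b.
Proof.
move=> eab; case: (pickP (fun w => e a w && e w b)) => [w /andP[]|no_path]; first by exists w.
have sub : O a \subset b |: (O a :&: O b).
  apply/subsetP => w; rewrite !inE => eaw; case: (eqVneq w b) => //= nwb.
  have := no_path w; rewrite /= eaw /=; case: (arc_total e_tour nwb) => [-> //|ebw _].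
  by rewrite ebw.
have := subset_leq_card sub; rewrite cardsU1 out_deg out_meet ?(arc_neq e_irr eab) //.
by case: (b \notin _); lia.
Qed.

(* A vertex dominated by the two others of a triple lies outside their triple
   out-meet, and is the only possible extra element of the closed triple meet. *)
Lemma sink_bound a b c : b != c -> e b a -> e c a ->
  #|O a :&: O b :&: O c| + #|C a :&: C b :&: C c| < l.*2.
Proof.
move=> nbc eba eca.
have lt_out : #|O a :&: O b :&: O c| < l.
  rewrite -(out_meet nbc) -setIA; apply: proper_card; apply/properP; split; first exact: subsetIr.
  by exists a; rewrite !inE ?eba ?eca ?e_irr.
have sub : C a :&: C b :&: C c \subset a |: (O a :&: O b :&: O c).
  apply/subsetP => w; rewrite !inE; case: (eqVneq w a) => //= nwa.
  case: (eqVneq w b) => [->|nwb]; first by rewrite (arc_asym e_irr e_tour eba).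
  by case: (eqVneq w c) => [->|_]; rewrite ?(arc_asym e_irr e_tour eca).
have := subset_leq_card sub; rewrite cardsU1; case: (a \notin _); lia.
Qed.

(* The contribution of three vertices of the first block of B1. *)
Lemma meet3_out_cout x y z : x != y -> y != z -> x != z ->
  #|O x :&: O y :&: O z| + #|C x :&: C y :&: C z| <= l.*2.
Proof.
move=> nxy nyz nxz.
have [|no_sink] := boolP [|| e y x && e z x, e x y && e z y | e x z && e y z].
  case/or3P => /andP[e1 e2]; apply: ltnW.
  - exact: sink_bound.
  - by rewrite (setIC (O x)) (setIC (C x)); apply: sink_bound.
  - by rewrite (setIC (O x :&: O y)) (setIC (C x :&: C y)) !setIA; apply: sink_bound.
move: no_sink; rewrite !negb_or => /and3P[nsx nsy nsz].
have sub : C x :&: C y :&: C z \subset O x :&: O y :&: O z.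
  apply/subsetP => w; rewrite !inE.
  case: (eqVneq w x) => [->|_]; first by rewrite (negbTE nxy) (negbTE nxz) /= (negbTE nsx).
  case: (eqVneq w y) => [->|_]; first by rewrite (negbTE nyz) andbT /= (negbTE nsy).
  by case: (eqVneq w z) => [->|_] //=; rewrite andbC (negbTE nsz) andbF.
have := subset_leq_card sub; have := meet3_le (O x) (O y) (O z); rewrite out_meet //; lia.
Qed.

Lemma cout_meet x y : x != y -> #|C x :&: C y| <= l.+1.
Proof.
wlog exy : x y / e x y.
  move=> gen nxy; case: (arc_total e_tour nxy) => [exy|eyx]; first exact: gen.
  by rewrite setIC; apply: gen; rewrite // eq_sym.
move=> nxy; have sub : C x :&: C y \subset y |: (O x :&: O y).
  apply/subsetP => w; rewrite !inE; case: (eqVneq w y) => //= nwy.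
  by case: (eqVneq w x) => [->|_]; rewrite ?(arc_asym e_irr e_tour exy) ?andbF.
by have := subset_leq_card sub; rewrite cardsU1 out_meet //; case: (y \notin _); lia.
Qed.

(* The contribution of two vertices of the first block and one of the third. *)
Lemma meet3_out_cout_in x y z : x != y ->
  #|O x :&: O y :&: O z| + #|C x :&: C y :&: I z| <= l.+1.
Proof.
move=> nxy; rewrite -cardsUI.
have -> : O x :&: O y :&: O z :&: (C x :&: C y :&: I z) = set0.
  apply/setP => w; rewrite !inE; apply/negbTE.
  by apply/negP => /andP[/andP[_ ezw] /andP[_ ewz]]; rewrite (arc_asym e_irr e_tour ezw) in ewz.
rewrite cards0 addn0; apply: leq_trans (cout_meet nxy); apply: subset_leq_card.
by apply/subsetP => w; rewrite !inE => /orP[] /andP[/andP[-> ->] _]; rewrite ?orbT.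
Qed.

(* The contribution of one vertex of the first block and two of the third. *)
Lemma meet3_out_cin x y z : y != z ->
  #|O x :&: O y :&: O z| + #|C x :&: I y :&: I z| <= l.*2.
Proof.
move=> nyz; rewrite -!setIA (setIC (O x)) (setIC (C x)).
have := meet3_le (O y) (O z) (O x); have := meet3_le (I y) (I z) (C x).
by rewrite out_meet // in_meet //; lia.
Qed.

Lemma no_sink a b c : O b :&: O c \subset O a -> e b a -> e c a -> False.
Proof.
by move=> sub eba eca; have := subsetP sub a; rewrite !inE eba eca e_irr => /(_ isT).
Qed.

(* If moreover pairwise in-meets lie in the third in-neighbourhood, the three
   vertices do not form a directed cycle a -> b -> c -> a either: a middle
   vertex w of a path a -> w -> b would be forced into O b or I a. *)
Lemma no_cycle a b c : e a b -> e c a ->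
  O a :&: O c \subset O b -> I b :&: I c \subset I a -> False.
Proof.
move=> eab eca /subsetP Osub /subsetP Isub; have [w eaw ewb] := arc_path2 eab.
have nwc : w != c by apply: contraTneq eaw => ->; rewrite (arc_asym e_irr e_tour eca).
case: (arc_total e_tour nwc) => [ewc | ecw].
  by have := Isub w; rewrite !inE ewb ewc (arc_asym e_irr e_tour eaw) => /(_ isT).
by have := Osub w; rewrite !inE eaw ecw (arc_asym e_irr e_tour ewb) => /(_ isT).
Qed.

(* The contribution of three vertices of the third block (which also share
   the middle vertex n): both triple meets cannot simultaneously attain l. *)
Lemma meet3_out_in x y z : x != y -> y != z -> x != z ->
  #|O x :&: O y :&: O z| + #|I x :&: I y :&: I z| < l.*2.
Proof.
move=> nxy nyz nxz; rewrite ltnNge; apply/negP => big.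
have := meet3_le (O x) (O y) (O z); have := meet3_le (I x) (I y) (I z).
rewrite out_meet // in_meet // => leI leO.
have Oxy : O x :&: O y \subset O z by apply: meet2_sub; rewrite out_meet //; lia.
have Oxz : O x :&: O z \subset O y by apply: meet2_sub; rewrite out_meet // setIAC; lia.
have Oyz : O y :&: O z \subset O x by apply: meet2_sub; rewrite out_meet // setIC setIA; lia.
have Ixy : I x :&: I y \subset I z by apply: meet2_sub; rewrite in_meet //; lia.
have Ixz : I x :&: I z \subset I y by apply: meet2_sub; rewrite in_meet // setIAC; lia.
have Iyz : I y :&: I z \subset I x by apply: meet2_sub; rewrite in_meet // setIC setIA; lia.
case: (arc_total e_tour nxy) => [exy|eyx]; case: (arc_total e_tour nyz) => [eyz|ezy];
  case: (arc_total e_tour nxz) => [exz|ezx].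
- exact: (no_sink Oxy exz eyz).
- exact: (no_cycle exy ezx Oxz Iyz).
- exact: (no_sink Oxz exy ezy).
- exact: (no_sink Oxz exy ezy).
- exact: (no_sink Oxy exz eyz).
- exact: (no_sink Oyz eyx ezx).
- by apply: (no_cycle exz eyx Oxy); rewrite setIC.
- exact: (no_sink Oyz eyx ezx).
Qed.
End DoublyRegular.

Definition arc (m : nat) (A : 'M[int]_m) : rel 'I_m := fun x y => A x y == 1%R.

Section Scheme.
Variables (m : nat) (A0 A1 A2 : 'M[int]_m).
Hypothesis scheme : nonsym_class2_scheme A0 A1 A2.

Local Notation e := (arc A1).

Lemma scheme_A0 : A0 = 1%:M%R.
Proof. by case: scheme. Qed.

Lemma scheme_A2 x y : A2 x y = A1 y x.
Proof. by case: scheme => _ [_ [_ [_ [<- _]]]]; rewrite mxE. Qed.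

Lemma A1E x y : A1 x y = (e x y)%:R%R.
Proof. by case: scheme => _ [A1_01 _]; rewrite /arc; case/orP: (A1_01 x y) => /eqP ->. Qed.

(* Entrywise, A0 + A1 + A2 = J says that exactly one of x = y, x -> y, y -> x holds. *)
Lemma arc_partition x y : ((x == y) + e x y + e y x = 1)%N.
Proof.
case: scheme => _ [_ [_ [sumJ _]]].
have := congr1 (fun M : 'M[int]_m => M x y) sumJ.
by rewrite !mxE scheme_A0 !mxE scheme_A2 !A1E -!natrD => /eqP; rewrite pnatr_eq1 => /eqP.
Qed.

Lemma arc_irr : irreflexive e.
Proof. by move=> x; have := arc_partition x x; rewrite eqxx; case: (e x x). Qed.

Lemma arc_tour x y : x != y -> e y x = ~~ e x y.
Proof.
by move=> /negbTE nxy; have := arc_partition x y; rewrite nxy; case: (e x y); case: (e y x).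
Qed.

Lemma gram_out x y : (A1 *m A2)%R x y = #|outN e x :&: outN e y|%:R%R.
Proof.
rewrite mxE card_indicator natr_sum; apply: eq_bigr => w _.
by rewrite scheme_A2 !A1E !inE -natrM mulnb.
Qed.

Lemma gram_in x y : (A2 *m A1)%R x y = #|inN e x :&: inN e y|%:R%R.
Proof.
rewrite mxE card_indicator natr_sum; apply: eq_bigr => w _.
by rewrite scheme_A2 !A1E !inE -natrM mulnb.
Qed.

(* A matrix of the Bose-Mesner algebra has entries c0 on the diagonal, c1 on
   arcs and c2 on reversed arcs; if its (x, y) entry is the symmetric quantity
   #|P x :&: P y|, then #|P x| = c0 and #|P x :&: P y| = c1 for all x != y. *)
Lemma gram_const (M : 'M[int]_m) (P : 'I_m -> {set 'I_m}) :
  (exists c0 c1 c2 : int, M = (c0 *: A0 + c1 *: A1 + c2 *: A2)%R) ->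
  (forall x y, M x y = #|P x :&: P y|%:R%R) ->
  exists k l, (forall x, #|P x| = k) /\ (forall x y, x != y -> #|P x :&: P y| = l).
Proof.
case=> c0 [c1 [c2 M_span]] M_gram.
have M_entry x y : M x y = (c0 * (x == y)%:R + c1 * (e x y)%:R + c2 * (e y x)%:R)%R.
  by rewrite M_span !mxE scheme_A0 !mxE scheme_A2 !A1E.
have diag x : #|P x|%:R%R = c0.
  by rewrite -(setIid (P x)) -M_gram M_entry eqxx arc_irr mulr1 !mulr0 !addr0.
have arc_meet x y : e x y -> #|P x :&: P y|%:R%R = c1.
  move=> exy; rewrite -M_gram M_entry exy (arc_asym arc_irr arc_tour exy).
  by rewrite (negbTE (arc_neq arc_irr exy)) mulr1 !mulr0 add0r addr0.
exists `|c0|%N, `|c1|%N; split=> [x | x y nxy]; first by rewrite -(diag x) natz absz_nat.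
case: (arc_total arc_tour nxy) => [exy | eyx]; last rewrite setIC.
  by rewrite -(arc_meet _ _ exy) natz absz_nat.
by rewrite -(arc_meet _ _ eyx) natz absz_nat.
Qed.

Lemma scheme_doubly_regular : 1 < m -> exists l, [/\ m = (l.*2.+1).*2.+1,
  forall x, #|outN e x| = l.*2.+1,
  forall x y, x != y -> #|outN e x :&: outN e y| = l &
  forall x y, x != y -> #|inN e x :&: inN e y| = l].
Proof.
move=> m_gt1; case: scheme => _ [_ [_ [_ [_ [_ closed]]]]].
have A1_in : A1 \in [:: A0; A1; A2] by rewrite !inE eqxx orbT.
have A2_in : A2 \in [:: A0; A1; A2] by rewrite !inE eqxx !orbT.
have [k [l [out_k out_l]]] := gram_const (closed A1 A2 A1_in A2_in) gram_out.
have [kI [lI [in_k in_l]]] := gram_const (closed A2 A1 A2_in A1_in) gram_in.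
have [|_ lI_l k_eq card_m] :=
  doubly_regular_params arc_irr arc_tour (k := k) _ out_k in_k out_l in_l; first by rewrite card_ord.
by move: in_l; rewrite lI_l => in_l; exists l; rewrite -k_eq -card_m card_ord.
Qed.
End Scheme.

Lemma bound_strict v K (P : Prop) : v < K -> ~ P -> v <= K /\ (v = K <-> P).
Proof. by move=> lt_vK notP; split; [exact: ltnW | split=> [eq_vK | /notP//]; lia]. Qed.

Lemma bound_attained v K (P : Prop) : v = K -> P -> v <= K /\ (v = K <-> P).
Proof. by move=> -> HP. Qed.

Lemma ord_neq_of_lt n (x y : 'I_n) : x < y -> x != y.
Proof. by move=> lt_xy; exact: negbT (ltn_eqF lt_xy). Qed.

Section B1Blocks.
Variables (m : nat) (A0 A1 A2 : 'M[int]_m).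
Hypothesis scheme : nonsym_class2_scheme A0 A1 A2.

Local Notation e := (arc A1).
Local Notation B := (B1mx A0 A1 A2).

Definition lidx (x : 'I_m) : 'I_(m + 1 + m) := lshift m (lshift 1 x).
Definition midx : 'I_(m + 1 + m) := lshift m (rshift m (ord0 : 'I_1)).
Definition ridx (x : 'I_m) : 'I_(m + 1 + m) := rshift (m + 1) x.

Variant idx_spec : 'I_(m + 1 + m) -> Type :=
  | IdxL x : idx_spec (lidx x)
  | IdxM : idx_spec midx
  | IdxR x : idx_spec (ridx x).

Lemma idxP u : idx_spec u.
Proof.
have u_lt := ltn_ord u; case: (ltnP u m) => [lt_um | le_mu].
  by rewrite (_ : u = lidx (Ordinal lt_um)); [constructor | apply: val_inj].
case: (eqVneq (u : nat) m) => [eq_um | /eqP ne_um].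
  by rewrite (_ : u = midx); [constructor | apply: val_inj; rewrite /= addn0].
have lt_um : u - (m + 1) < m by lia.
by rewrite (_ : u = ridx (Ordinal lt_um)); [constructor | apply: val_inj => /=; lia].
Qed.

Lemma card_blocks (S : {set 'I_(m + 1 + m)}) :
  #|S| = #|[set y | lidx y \in S]| + (midx \in S) + #|[set y | ridx y \in S]|.
Proof.
rewrite card_indicator big_split_ord /= big_split_ord /= big_ord1.
by congr (_ + _ + _); rewrite card_indicator; apply: eq_bigr => y _; rewrite inE.
Qed.

Definition nbL u := [set y | B u (lidx y) == 1%R].
Definition nbM u := B u midx == 1%R.
Definition nbR u := [set y | B u (ridx y) == 1%R].

Lemma nu_blocks u v w : nu B u v w =
  #|nbL u :&: nbL v :&: nbL w| + [&& nbM u, nbM v & nbM w] + #|nbR u :&: nbR v :&: nbR w|.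
Proof.
rewrite /nu card_blocks.
by congr (_ + _ + _); [apply: eq_card => y | | apply: eq_card => y]; rewrite !inE ?andbA.
Qed.

Lemma nbL_lidx x : nbL (lidx x) = outN e x.
Proof. by apply/setP => y; rewrite !inE block_mxEul block_mxEul. Qed.
Lemma nbL_midx : nbL midx = setT.
Proof. by apply/setP => y; rewrite !inE block_mxEul block_mxEdl mxE. Qed.
Lemma nbL_ridx x : nbL (ridx x) = outN e x.
Proof. by apply/setP => y; rewrite !inE block_mxEdl row_mxEl. Qed.
Lemma nbM_lidx x : nbM (lidx x) = false.
Proof. by rewrite /nbM block_mxEul block_mxEur mxE. Qed.
Lemma nbM_midx : nbM midx = false.
Proof. by rewrite /nbM block_mxEul block_mxEdr mxE. Qed.
Lemma nbM_ridx x : nbM (ridx x) = true.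
Proof. by rewrite /nbM block_mxEdl row_mxEr mxE. Qed.
Lemma nbR_lidx x : nbR (lidx x) = coutN e x.
Proof.
apply/setP => y; rewrite !inE block_mxEur col_mxEu !mxE (scheme_A0 scheme) !mxE (A1E scheme).
by case: (eqVneq y x) => [->|_]; [rewrite (arc_irr scheme) | case: (e x y)].
Qed.
Lemma nbR_midx : nbR midx = set0.
Proof. by apply/setP => y; rewrite !inE block_mxEur col_mxEd mxE. Qed.
Lemma nbR_ridx x : nbR (ridx x) = inN e x.
Proof. by apply/setP => y; rewrite !inE block_mxEdr (scheme_A2 scheme). Qed.

Variable l : nat.
Hypothesis out_deg : forall x, #|outN e x| = l.*2.+1.
Hypothesis out_meet : forall x y, x != y -> #|outN e x :&: outN e y| = l.
Hypothesis in_meet : forall x y, x != y -> #|inN e x :&: inN e y| = l.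
Hypothesis l_gt0 : 0 < l.

Let irr : irreflexive e := arc_irr scheme.
Let tour : forall x y, x != y -> e y x = ~~ e x y := arc_tour scheme.

(* The triple (a, n, n+a) of the paper, 0-based: (lidx a, midx, ridx a). *)
Definition diag_triple (i j k : 'I_(m + 1 + m)) :=
  exists a : 'I_m, [/\ val i = val a, val j = m & val k = m.+1 + val a].

(* Of the 27 block patterns of (i, j, k), the order i < j < k leaves seven;
   in each the common neighbourhood has size at most 2l+1, attained only by
   the triples (lidx a, midx, ridx a), whose common neighbours are the lidx y
   with y an out-neighbour of a. *)
Lemma nu_B1_bound (i j k : 'I_(m + 1 + m)) : i < j < k ->
  nu B i j k <= l.*2.+1 /\ (nu B i j k = l.*2.+1 <-> diag_triple i j k).
Proof.
rewrite nu_blocks /diag_triple.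
case: (idxP i) => [x||x]; case: (idxP j) => [y||y]; case: (idxP k) => [z||z];
  rewrite ?nbL_lidx ?nbL_midx ?nbL_ridx ?nbM_lidx ?nbM_midx ?nbM_ridx;
  rewrite ?nbR_lidx ?nbR_midx ?nbR_ridx /= ?addn0 => ord_ijk;
  try (have lt_x := ltn_ord x); try (have lt_y := ltn_ord y); try (have lt_z := ltn_ord z);
  try by exfalso; lia.
all: rewrite ?setIT ?setTI ?setI0 ?set0I ?cards0 ?addn0.
- apply: bound_strict; last by case=> a []; lia.
  by rewrite ltnS meet3_out_cout //; apply: ord_neq_of_lt; lia.
- apply: bound_strict; last by case=> a []; lia.
  by rewrite out_meet; [lia | apply: ord_neq_of_lt; lia].
- apply: bound_strict; last by case=> a []; lia.
  apply: (@leq_ltn_trans l.+1); last lia.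
  by apply: meet3_out_cout_in => //; apply: ord_neq_of_lt; lia.
- case: (eqVneq x z) => [<- | nxz].
    by apply: bound_attained; [rewrite setIid out_deg | exists x; rewrite addn1].
  apply: bound_strict; first by rewrite out_meet //; lia.
  by case=> a [xa _ za]; apply/(negP nxz)/eqP/ord_inj; lia.
- apply: bound_strict; last by case=> a []; lia.
  by rewrite ltnS meet3_out_cin //; apply: ord_neq_of_lt; lia.
- apply: bound_strict; last by case=> a []; lia.
  by rewrite out_meet; [lia | apply: ord_neq_of_lt; lia].
- apply: bound_strict; last by case=> a []; lia.
  rewrite addn1 ltnS; apply: meet3_out_in => //; apply: ord_neq_of_lt; lia.
Qed.
End B1Blocks.

Theorem lemma1 (n : nat) (A0 A1 A2 : 'M[int]_(n.-1)) :
  8 <= n ->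
  nonsym_class2_scheme A0 A1 A2 ->
  forall i j k : 'I_(n.-1 + 1 + n.-1),
    i < j < k ->
    2 * nu (B1mx A0 A1 A2) i j k <= n - 2 /\
    (2 * nu (B1mx A0 A1 A2) i j k = n - 2 <->
       exists a : 'I_(n.-1),
         [/\ val i = val a, val j = n.-1 & val k = n + val a]).
Proof.
move=> n_ge8 scheme i j k ord_ijk.
(* The scheme yields a doubly regular tournament with n = 4l+4. *)
have order_gt1 : 1 < n.-1 by lia.
have [l [order_eq out_deg out_meet in_meet]] := scheme_doubly_regular scheme order_gt1.
have l_gt0 : 0 < l by lia.
(* The bound nu <= 2l+1 with its equality case, read with n - 2 = 2(2l+1). *)
have [nu_le nu_eq] := nu_B1_bound scheme out_deg out_meet in_meet l_gt0 ord_ijk.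
move: nu_eq; rewrite /diag_triple prednK; last lia.
have -> : n - 2 = (l.*2.+1).*2 by lia.
by move=> <-; split; [lia | split; lia].
Qed.
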